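(* Let $X$ be a real Hilbert space, $r>0$, and let $Z\subset X$ be an $r$-prox-regular set. Then the following two conditions are equivalent: (a) there exists $\rho\in(0,r/5)$ such that for every $x\in Z$ there exists $\bar x\in Z$ with $|x-\bar x|^2+\rho^2<2r\rho$ and $B_{3\rho}(\bar x)\subset Z$; (b) there exist $s>0$ and $d>0$ such that for every $x\in Z$ there exists $x^*\in Z$ with $|x-x^*|\le d$ such that for all $\alpha\in(0,1]$ we have $x+\alpha(x^*-x)+\alpha B_s(0)\subset Z$.
   Context: $X$ is a real Hilbert space with scalar product $\langle\cdot,\cdot\rangle$ and norm $|\cdot|$; $\mathrm{dist}(x,Z)=\inf\{|x-z|:z\in Z\}$; $B_\delta(x)=\{y\in X:|y-x|\le\delta\}$ is the closed ball, and $x+\alpha B_s(0)=\{x+\alpha v: |v|\le s\}$. A closed connected set $Z\subset X$ is called $r$-prox-regular ($r>0$) if for every $y\in X$ with $\mathrm{dist}(y,Z)=d\in(0,r)$ there exists $x\in Z$ such that $\mathrm{dist}\left(x+\frac{r}{d}(y-x),Z\right)=\frac{r}{d}|y-x|=r$. *)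

From HB Require Import structures.
From mathcomp Require Import all_boot all_order all_algebra.
From mathcomp Require Import all_classical all_reals all_analysis.
Set Implicit Arguments. Unset Strict Implicit. Unset Printing Implicit Defensive.
Import Order.TTheory GRing.Theory Num.Theory.
Import numFieldNormedType.Exports.
Local Open Scope classical_set_scope.
Local Open Scope ring_scope.

(* A real Hilbert space is modelled as a complete normed module V over a
   realType R together with a scalar product [ip] (symmetric, linear in the
   first argument) inducing the norm: <x,x> = |x|^2. *)
Definition is_scalar_product (R : realType) (V : normedModType R)
  (ip : V -> V -> R) : Prop :=
  (forall x y, ip x y = ip y x) /\
  (forall (a : R) (x y z : V), ip (a *: x + y) z = a * ip x z + ip y z) /\
  (forall x, ip x x = `|x| ^+ 2).

Definition dist (R : realType) (V : normedModType R) (x : V) (Z : set V) : R :=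
  inf [set `|x - z| | z in Z].

Definition cball (R : realType) (V : normedModType R) (x : V) (delta : R)
  : set V := [set y | `|y - x| <= delta].

Definition prox_regular (R : realType) (V : normedModType R) (r : R)
  (Z : set V) : Prop :=
  closed Z /\ connected Z /\
  forall y : V, 0 < dist y Z < r ->
    exists2 x, Z x &
      dist (x + (r / dist y Z) *: (y - x)) Z = (r / dist y Z) * `|y - x| /\
      (r / dist y Z) * `|y - x| = r.

From HB Require Import structures.
From mathcomp Require Import all_boot all_order all_algebra.
From mathcomp Require Import all_classical all_reals all_analysis.
From mathcomp Require Import ring lra.

(* (b) => (a): for small t the point x + t (x* - x) carries the ball of radius
   t s, while its distance to x is only O(t), so the quadratic inequality of (a)
   holds with rho = t s / 3.
   (a) => (b), with x* = xb, s = rho, d = r: suppose a point y = x + alpha (u - x),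
   |u - xb| <= rho, of the cone lies outside Z.  It is at distance < r from Z, so
   prox-regularity yields an open ball B(c, r) missing Z with |y - c| < r.  Since
   B(u, 2 rho) is inside Z, |c - u| >= r + 2 rho, and |c - x| >= r, while
   |x - u|^2 < 4 r rho.  The Hilbert identity
   |(1-a) p + a q|^2 = (1-a)|p|^2 + a|q|^2 - a(1-a)|p - q|^2
   then gives |c - y| > r, a contradiction. *)

Set Implicit Arguments.
Unset Strict Implicit.
Unset Printing Implicit Defensive.
Import Order.TTheory GRing.Theory Num.Theory.
Import numFieldNormedType.Exports.
Local Open Scope classical_set_scope.
Local Open Scope ring_scope.

Section ScalarProduct.
Variables (R : realType) (V : normedModType R) (ip : V -> V -> R).
Hypothesis ip_sp : is_scalar_product ip.

Lemma ip0l z : ip 0 z = 0.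
Proof.
case: ip_sp => _ [lin _]; have := lin 1 0 0 z.
rewrite scale1r addr0 mul1r => h.
by apply: (@addrI _ (ip 0 z)); rewrite addr0 -h.
Qed.

Lemma ipDl x y z : ip (x + y) z = ip x z + ip y z.
Proof. by case: ip_sp => _ [lin _]; rewrite -[x]scale1r lin mul1r scale1r. Qed.

Lemma ipZl (a : R) x z : ip (a *: x) z = a * ip x z.
Proof. by case: ip_sp => _ [lin _]; have := lin a x 0 z; rewrite addr0 ip0l addr0. Qed.

Lemma ipDr x y z : ip z (x + y) = ip z x + ip z y.
Proof. by case: ip_sp => sym _; rewrite !(sym z) ipDl. Qed.

Lemma ipZr (a : R) x z : ip z (a *: x) = a * ip z x.
Proof. by case: ip_sp => sym _; rewrite !(sym z) ipZl. Qed.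

Lemma sqr_norm_lincomb (a b : R) (p q : V) :
  `|a *: p + b *: q| ^+ 2 =
  a ^+ 2 * `|p| ^+ 2 + 2 * a * b * ip p q + b ^+ 2 * `|q| ^+ 2.
Proof.
case: ip_sp => sym [_ nrm].
rewrite -!nrm ipDl !ipZl !ipDr !ipZr (sym q p); ring.
Qed.

Lemma sqr_norm_convex (a : R) (p q : V) :
  `|(1 - a) *: p + a *: q| ^+ 2 =
  (1 - a) * `|p| ^+ 2 + a * `|q| ^+ 2 - a * (1 - a) * `|p - q| ^+ 2.
Proof.
have -> : p - q = 1 *: p + (-1) *: q by rewrite scale1r scaleN1r.
rewrite !sqr_norm_lincomb; ring.
Qed.

Lemma lt_norm_convex (a r s : R) (p q : V) : 0 < a <= 1 -> 0 <= r <= s ->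
  r <= `|p| -> s <= `|q| -> `|p - q| ^+ 2 < s ^+ 2 - r ^+ 2 ->
  r < `|(1 - a) *: p + a *: q|.
Proof.
move=> /andP[a0 a1] /andP[r0 rs] rp sq pq.
rewrite -(@ltr_pXn2r _ 2) ?nnegrE // sqr_norm_convex.
have rp2 : r ^+ 2 <= `|p| ^+ 2 by rewrite lerXn2r ?nnegrE.
have sq2 : s ^+ 2 <= `|q| ^+ 2 by rewrite lerXn2r ?nnegrE //; lra.
have := sqr_ge0 `|p - q|; nra.
Qed.

Lemma segment_outside_ball (a r s : R) (c x u : V) : 0 < a <= 1 ->
  0 <= r <= s -> r <= `|c - x| -> s <= `|c - u| ->
  `|x - u| ^+ 2 < s ^+ 2 - r ^+ 2 -> r < `|c - (x + a *: (u - x))|.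
Proof.
move=> a01 rs cx cu xu.
have -> : u - x = (c - x) - (c - u) by rewrite opprB [RHS]addrC subrKA.
have -> : c - (x + a *: ((c - x) - (c - u))) = (1 - a) *: (c - x) + a *: (c - u).
  by rewrite opprD addrA scalerBl scale1r scalerBr opprB addrA addrAC.
apply: (@lt_norm_convex a r s) => //.
by rewrite opprB addrC subrKA distrC.
Qed.

End ScalarProduct.

Section Distance.
Variables (R : realType) (V : normedModType R).
Implicit Types (Z : set V) (x y z : V).

Lemma dist_le Z x z : Z z -> dist x Z <= `|x - z|.
Proof. by move=> Zz; apply: ge_inf; [exists 0 => _ [w _ <-] | exists z]. Qed.

Lemma le_dist Z x (e : R) : Z !=set0 ->
  (forall z, Z z -> e <= `|x - z|) -> e <= dist x Z.
Proof.
move=> [z Zz] le_e; apply: lb_le_inf; first by exists `|x - z|, z.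
by move=> _ [w Zw <-]; exact: le_e.
Qed.

(* [Z !=set0] is needed because [inf set0 = 0]. *)
Lemma closed_dist_gt0 Z y : closed Z -> Z !=set0 -> ~ Z y -> 0 < dist y Z.
Proof.
move=> Zc Z0 Zy; have := closed_openC Zc.
rewrite openE => /(_ y Zy) /nbhs_ballP [e /= e0 yZ].
apply: (lt_le_trans e0); apply: le_dist => // z Zz.
rewrite leNgt; apply/negP => ze; apply: (yZ z) => //.
by rewrite -ball_normE /ball_ /=.
Qed.

Lemma cball_scale_sub x (t s : R) : 0 < t ->
  cball x (t * s) `<=` [set x + t *: v | v in cball 0 s].
Proof.
move=> t0 y xy; exists (t^-1 *: (y - x)).
  by rewrite /cball /= subr0 normrZ normfV gtr0_norm // ler_pdivrMl.
by rewrite scalerA mulfV ?gt_eqF // scale1r addrC subrK.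
Qed.

Lemma far_from_cball Z (c u : V) (r delta : R) : 0 < r -> 0 <= delta ->
  cball u delta `<=` Z -> (forall z, Z z -> r <= `|c - z|) ->
  r + delta <= `|c - u|.
Proof.
move=> r0 delta0 uZ cZ; set Q := `|c - u|.
have [Qdelta | deltaQ] := leP Q delta.
  by have := cZ c (uZ c Qdelta); rewrite subrr normr0; lra.
pose t := delta / Q.
have Q0 : 0 < Q by lra.
have tQ : t * Q = delta by rewrite /t mulfVK ?gt_eqF.
have t0 : 0 <= t by rewrite /t divr_ge0 // ltW.
have t1 : 0 <= 1 - t by rewrite subr_ge0 /t ler_pdivrMr // mul1r ltW.
have Zz : Z (u + t *: (c - u)).
  by apply: uZ; rewrite /cball /= addrAC subrr add0r normrZ ger0_norm // tQ.
have := cZ _ Zz.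
have -> : c - (u + t *: (c - u)) = (1 - t) *: (c - u).
  by rewrite scalerBl scale1r opprD addrA.
by rewrite normrZ ger0_norm // mulrBl mul1r tQ -/Q; lra.
Qed.

Lemma prox_regular_exterior_ball (r : R) Z y :
  prox_regular r Z -> 0 < dist y Z < r ->
  exists c, `|y - c| < r /\ forall z, Z z -> r <= `|c - z|.
Proof.
case=> _ [_ prox] dy; have [p _ [dc rc]] := prox y dy.
set d := dist y Z in dy dc rc *; case/andP: dy => d0 dr.
have yp : `|y - p| = d.
  have -> : `|y - p| = d * (r / d * `|y - p|) / r.
    by field; apply/andP; split; rewrite gt_eqF //; lra.
  by rewrite rc mulfK // gt_eqF //; lra.
exists (p + (r / d) *: (y - p)); split.
  have -> : y - (p + r / d *: (y - p)) = (1 - r / d) *: (y - p).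
    by rewrite scalerBl scale1r opprD addrA.
  rewrite normrZ yp -[X in _ * X]gtr0_norm // -normrM mulrBl mul1r mulfVK ?gt_eqF //.
  rewrite distrC gtr0_norm; lra.
by move=> z Zz; rewrite -[X in X <= _]rc -dc; exact: dist_le.
Qed.

End Distance.

Definition uniform_ball_property (R : realType) (V : normedModType R)
    (r : R) (Z : set V) :=
  exists rho : R, 0 < rho < r / 5 /\
    forall x, Z x -> exists2 xb, Z xb &
      `|x - xb| ^+ 2 + rho ^+ 2 < 2 * r * rho /\ cball xb (3 * rho) `<=` Z.

Definition uniform_cone_property (R : realType) (V : normedModType R)
    (Z : set V) :=
  exists s d : R, 0 < s /\ 0 < d /\
    forall x, Z x -> exists2 xs, Z xs &
      `|x - xs| <= d /\
      forall alpha : R, 0 < alpha <= 1 ->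
        [set x + alpha *: (xs - x) + alpha *: v | v in cball (0 : V) s]
          `<=` Z.

Lemma prox_regular_cone_sub (R : realType) (V : normedModType R)
    (ip : V -> V -> R) (r rho alpha : R) (Z : set V) (x xb v : V) :
  is_scalar_product ip -> prox_regular r Z -> 0 < rho < r / 5 ->
  Z x -> `|x - xb| ^+ 2 + rho ^+ 2 < 2 * r * rho -> cball xb (3 * rho) `<=` Z ->
  0 < alpha <= 1 -> `|v| <= rho -> Z (x + alpha *: (xb - x) + alpha *: v).
Proof.
move=> ip_sp Zpr /andP[rho0 rho_r] Zx xxb xbZ /andP[alpha0 alpha1] vrho.
set a := `|x - xb| in xxb; have a0 : 0 <= a := normr_ge0 _.
have ar : a + rho < r.
  have : 0 < r * (r - 5 * rho) by apply: mulr_gt0; lra.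
  rewrite -ltrBrDr -(@ltr_pXn2r _ 2) ?nnegrE //; [nra | lra].
set y := x + _ + _; apply: contrapT => Zy.
have yxu : y = x + alpha *: (xb + v - x).
  by rewrite /y -addrA -scalerDr addrAC.
have yx : `|y - x| <= a + rho.
  rewrite yxu addrAC subrr add0r normrZ gtr0_norm //.
  apply: le_trans (_ : `|xb + v - x| <= _); first by rewrite ler_piMl.
  rewrite addrAC; apply: (le_trans (ler_normD _ _)).
  by rewrite distrC lerD2l.
have [c [yc cZ]] : exists c, `|y - c| < r /\ forall z, Z z -> r <= `|c - z|.
  apply: prox_regular_exterior_ball => //; apply/andP; split.
    by case: Zpr => Zc _; apply: closed_dist_gt0 => //; exists x.
  by apply: le_lt_trans (dist_le y Zx) _; lra.
have uc : r + 2 * rho <= `|c - (xb + v)|.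
  apply: far_from_cball cZ; [lra | lra | move=> z].
  rewrite /cball /= => zu; apply: xbZ; rewrite /cball /=.
  have -> : z - xb = (z - (xb + v)) + v by rewrite opprD addrA subrK.
  by apply: (le_trans (ler_normD _ _)); lra.
have : r < `|c - y|.
  rewrite yxu; apply: (segment_outside_ball ip_sp _ _ (cZ x Zx) uc).
  - by rewrite alpha0.
  - by apply/andP; split; lra.
  have xu : `|x - (xb + v)| <= a + rho.
    by rewrite opprD addrA; apply: (le_trans (ler_normB _ _)); rewrite lerD2l.
  have : `|x - (xb + v)| ^+ 2 <= (a + rho) ^+ 2.
    by apply: lerXn2r; rewrite ?nnegrE //; lra.
  nra.
by move=> cy; rewrite distrC in yc; lra.
Qed.

Lemma uniform_ball_cone_property (R : realType) (V : normedModType R)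
    (ip : V -> V -> R) (r : R) (Z : set V) :
  is_scalar_product ip -> 0 < r -> prox_regular r Z ->
  uniform_ball_property r Z -> uniform_cone_property Z.
Proof.
move=> ip_sp r0 Zpr [rho [rho_r ball]]; exists rho, r.
case/andP: (rho_r) => rho0 _; do 2![split=> //].
move=> x Zx; have [xb Zxb [xxb xbZ]] := ball x Zx.
exists xb => //; split=> [|alpha alpha01 _ [v v0 <-]].
  by rewrite -(@ler_pXn2r _ 2) ?nnegrE // ?ltW //; nra.
apply: (prox_regular_cone_sub ip_sp Zpr rho_r Zx xxb xbZ alpha01).
by rewrite /cball /= subr0 in v0.
Qed.

Lemma uniform_cone_ball_property (R : realType) (V : normedModType R)
    (r : R) (Z : set V) :
  0 < r -> uniform_cone_property Z -> uniform_ball_property r Z.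
Proof.
move=> r0 [s [d [s0 [d0 cone]]]].
pose D := d ^+ 2 + s ^+ 2 + r * s.
have D0 : 0 < D by rewrite /D; nra.
pose t := r * s / (3 * D).
have tD : t * D = r * s / 3 by rewrite /t; field; lra.
have t0 : 0 < t by rewrite /t; apply: divr_gt0; nra.
have t1 : t <= 1 by rewrite -(ler_pM2r D0) mul1r tD /D; nra.
have ts : t * s < r / 3.
  have : t * s ^+ 2 < t * D by rewrite ltr_pM2l // /D; nra.
  by rewrite tD; nra.
exists (t * s / 3); split; first by apply/andP; split; nra.
move=> x Zx; have [xs Zxs [xxs xs_cone]] := cone x Zx.
have tcone := xs_cone t (introT andP (conj t0 t1)).
exists (x + t *: (xs - x)).
  apply: tcone; exists 0; last by rewrite scaler0 addr0.
  by rewrite /cball /= subrr normr0 ltW.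
split.
  rewrite opprD addrA subrr add0r normrN normrZ gtr0_norm // distrC.
  have xxs2 : (t * `|x - xs|) ^+ 2 <= (t * d) ^+ 2.
    apply: lerXn2r; rewrite ?nnegrE ?ler_pM2l //.
    1,2: by rewrite mulr_ge0 // ltW.
  have : t * (t * (d ^+ 2 + s ^+ 2 / 9)) <= t * (r * s / 3).
    by rewrite ler_pM2l // -tD ler_pM2l // /D; nra.
  have := mulr_gt0 t0 (mulr_gt0 r0 s0).
  lra.
have -> : 3 * (t * s / 3) = t * s by field.
exact: subset_trans (cball_scale_sub t0) tcone.
Qed.

Theorem lemma1p6 (R : realType) (V : completeNormedModType R)
  (ip : V -> V -> R) (Hip : is_scalar_product ip)
  (r : R) (Z : set V) (hr : 0 < r) (HZ : prox_regular r Z) :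
  (exists rho : R, 0 < rho < r / 5 /\
     forall x, Z x -> exists2 xb, Z xb &
       `|x - xb| ^+ 2 + rho ^+ 2 < 2 * r * rho /\ cball xb (3 * rho) `<=` Z)
  <->
  (exists s d : R, 0 < s /\ 0 < d /\
     forall x, Z x -> exists2 xs, Z xs &
       `|x - xs| <= d /\
       forall alpha : R, 0 < alpha <= 1 ->
         [set x + alpha *: (xs - x) + alpha *: v | v in cball (0 : V) s]
           `<=` Z).
Proof.
split; first exact: uniform_ball_cone_property Hip hr HZ.
exact: uniform_cone_ball_property.
Qed.
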